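(* Let $n\ge 1$ and let $\gamma: S^n\to\mathbb{R}_+$ be a continuous function. Then the Wulff shape $\mathcal{W}_\gamma\subset\mathbb{R}^{n+1}$ is self-dual, i.e. $\mathcal{W}_\gamma=\mathcal{DW}_\gamma$, if and only if the spherical convex body $\alpha_N^{-1}\circ Id(\mathcal{W}_\gamma)\subset S^{n+1}$ induced by $\mathcal{W}_\gamma$ is of constant width $\pi/2$.
   Context: $S^n$ is the unit sphere in $\mathbb{R}^{n+1}$, $\mathbb{R}_+$ the positive reals, and $x\cdot y$ the standard scalar product. For continuous $\gamma:S^n\to\mathbb{R}_+$, the Wulff shape is $\mathcal{W}_\gamma=\bigcap_{\theta\in S^n}\{x\in\mathbb{R}^{n+1}: x\cdot\theta\le\gamma(\theta)\}$; it is a convex body containing the origin in its interior. For each $\theta\in S^n$ the ray $\{r\theta: r>0\}$ meets $\partial\mathcal{W}_\gamma$ in exactly one point $w(\theta)\theta$ with $w(\theta)>0$. The dual Wulff shape is $\mathcal{DW}_\gamma=\mathcal{W}_{\overline{\gamma}}$ where $\overline{\gamma}(\theta)=1/w(-\theta)$; $\mathcal{W}_\gamma$ is self-dual if $\mathcal{W}_\gamma=\mathcal{DW}_\gamma$. On $S^{n+1}\subset\mathbb{R}^{n+2}$: for $P\in S^{n+1}$, $H(P)=\{Q\in S^{n+1}: P\cdot Q\ge 0\}$. A subset $\widetilde W\subset S^{n+1}$ is hemispherical if there is $P$ with $\widetilde W\cap H(P)=\emptyset$. For $P,Q\in S^{n+1}$, $P\neq -Q$, the arc $PQ=\{((1-t)P+tQ)/\|(1-t)P+tQ\|: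 t\in[0,1]\}$ and $|PQ|=\arccos(P\cdot Q)$ is its length. A hemispherical set is spherical convex if it contains the arc $PQ$ whenever it contains $P,Q$; a spherical convex body is a closed, spherical convex, hemispherical set with nonempty interior. $H(P)$ supports $\widetilde W$ if $\widetilde W\subset H(P)$ and $\partial\widetilde W\cap\partial H(P)\neq\emptyset$. For $P\neq\pm Q$, $H(P)\cap H(Q)$ is a lune with thickness $\Delta(H(P)\cap H(Q))=\pi-|PQ|$. For $H(P)$ supporting $\widetilde W$, $\mathrm{width}_{H(P)}\widetilde W$ is the minimum of $\Delta(H(P)\cap H(Q))$ over all $H(Q)$ supporting $\widetilde W$ with $\widetilde W\subset H(P)\cap H(Q)$. For $0<\rho<\pi$, $\widetilde W$ is of constant width $\rho$ if $\mathrm{width}_{H(P)}\widetilde W=\rho$ for every hemisphere $H(P)$ supporting $\widetilde W$. $N=(0,\dots,0,1)\in S^{n+1}$, $Id:\mathbb{R}^{n+1}\to\mathbb{R}^{n+1}\times\{1\}$, $Id(x)=(x,1)$, and $\alpha_N:\{P\in S^{n+1}: P_{n+2}>0\}\to\mathbb{R}^{n+1}\times\{1\}$ is the central projection $\alpha_N(P_1,\dots,P_{n+2})=(P_1/P_{n+2},\dots,P_{n+1}/P_{n+2},1)$. The spherical convex body induced by a Wulff shape $W$ is $\alpha_N^{-1}\circ Id(W)$. *)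

From Stdlib Require Import Reals Lra.
Open Scope R_scope.

(* Vectors of R^m are represented by functions nat -> R; only the
   coordinates 0..m-1 are ever inspected by the definitions below. *)
Definition vec := nat -> R.

Fixpoint dot (m : nat) (x y : vec) : R :=
  match m with
  | O => 0
  | S k => dot k x y + x k * y k
  end.

Definition vnorm (m : nat) (x : vec) : R := sqrt (dot m x x).
Definition vsub (x y : vec) : vec := fun i => x i - y i.
Definition vscal (r : R) (x : vec) : vec := fun i => r * x i.
Definition vopp (x : vec) : vec := fun i => - x i.

Definition veq (m : nat) (x y : vec) : Prop := forall i, (i < m)%nat -> x i = y i.

Definition on_sphere (m : nat) (x : vec) : Prop := dot m x x = 1.

Definition boundary (m : nat) (A : vec -> Prop) (p : vec) : Prop :=
  forall eps, 0 < eps ->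
    (exists y, vnorm m (vsub y p) < eps /\ A y) /\
    (exists y, vnorm m (vsub y p) < eps /\ ~ A y).

Definition sph_boundary (m : nat) (A : vec -> Prop) (p : vec) : Prop :=
  on_sphere m p /\
  forall eps, 0 < eps ->
    (exists y, on_sphere m y /\ vnorm m (vsub y p) < eps /\ A y) /\
    (exists y, on_sphere m y /\ vnorm m (vsub y p) < eps /\ ~ A y).

Definition cont_on_sphere (m : nat) (g : vec -> R) : Prop :=
  forall t, on_sphere m t -> forall eps, 0 < eps ->
    exists delta, 0 < delta /\
      forall t', on_sphere m t' -> vnorm m (vsub t' t) < delta ->
        Rabs (g t' - g t) < eps.

Definition Wulff (n : nat) (g : vec -> R) (x : vec) : Prop :=
  forall t, on_sphere (S n) t -> dot (S n) x t <= g t.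

(* Dual Wulff shape DW_gamma = W_{gbar}, gbar(t) = 1 / w(-t), where w(t) > 0
   is the (unique) number with w(t) t on the boundary of W_gamma. *)
Definition dual_Wulff (n : nat) (g : vec -> R) (x : vec) : Prop :=
  forall t, on_sphere (S n) t ->
    forall r, 0 < r -> boundary (S n) (Wulff n g) (vscal r (vopp t)) ->
      dot (S n) x t <= 1 / r.

Definition hemi (m : nat) (P : vec) (Q : vec) : Prop :=
  on_sphere m Q /\ 0 <= dot m P Q.

Definition arc_len (m : nat) (P Q : vec) : R := acos (dot m P Q).

Definition supports (m : nat) (Wt : vec -> Prop) (P : vec) : Prop :=
  on_sphere m P /\
  (forall Q, Wt Q -> hemi m P Q) /\
  exists Q, sph_boundary m Wt Q /\ sph_boundary m (hemi m P) Q.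

(* width_{H(P)} Wt = rho: minimum of Delta(H(P) cap H(Q)) = pi - |PQ| over
   supporting H(Q) with Wt subset H(P) cap H(Q) (a lune: P <> +-Q) equals rho *)
Definition width_eq (m : nat) (Wt : vec -> Prop) (P : vec) (rho : R) : Prop :=
  let adm Q := supports m Wt Q /\ (forall X, Wt X -> hemi m P X /\ hemi m Q X)
               /\ ~ veq m Q P /\ ~ veq m Q (vopp P) in
  (exists Q, adm Q /\ PI - arc_len m P Q = rho) /\
  (forall Q, adm Q -> rho <= PI - arc_len m P Q).

Definition constant_width (m : nat) (Wt : vec -> Prop) (rho : R) : Prop :=
  forall P, supports m Wt P -> width_eq m Wt P rho.

(* alpha_N^{-1} o Id (W) subset S^(n+1), N = e_(n+1) (0-based index n+1) *)
Definition induced (n : nat) (W : vec -> Prop) (P : vec) : Prop :=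
  on_sphere (S (S n)) P /\ 0 < P (S n) /\ W (fun i => P i / P (S n)).

From Stdlib Require Import Reals Lra Lia FunctionalExtensionality Classical ClassicalEpsilon.
Open Scope R_scope.

(* The lift x |-> (x,1)/sqrt(1+|x|^2) identifies R^(n+1) with the open upper hemisphere
   of S^(n+1), and lifts X, Y of x, y satisfy X.Y = X_N Y_N (x.y + 1).  Hence a hemisphere
   H(P) contains the induced body T exactly when the central projection of P lies in
   D = {p | p.y >= -1 for all y in W}, which is the dual Wulff shape, and a lune has
   thickness pi/2 exactly when its poles are orthogonal.  If W = D, then T is self-polar
   (H(P) contains T iff P lies in T): a supporting H(P) touches T at some Q with P.Q = 0,
   H(Q) supports T, and every other admissible pole lies in T, so no lune is thinner.
   Conversely, constant width pi/2 gives p.q >= -1 for all p, q in D, whence D is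
   contained in W; and the pole orthogonal to the supporting hemisphere of W in a given
   direction lies in D and shows that W is contained in D. *)

(** * Coordinate algebra of [dot] *)

Lemma Rabs_le_between a b : Rabs a <= b -> -b <= a <= b.
Proof. unfold Rabs; destruct Rcase_abs; lra. Qed.

Lemma Rabs_lt_between a b : Rabs a < b -> -b < a < b.
Proof. unfold Rabs; destruct Rcase_abs; lra. Qed.

Lemma dot_ext m x x' y y' :
  (forall i, (i < m)%nat -> x i = x' i /\ y i = y' i) -> dot m x y = dot m x' y'.
Proof.
  induction m as [|m IH]; simpl; intros H; auto.
  destruct (H m) as [-> ->]; [lia|]. rewrite IH; auto.
Qed.

Lemma dot_extl m x x' y : (forall i, (i < m)%nat -> x i = x' i) -> dot m x y = dot m x' y.
Proof. intros; apply dot_ext; intros; split; auto. Qed.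

Lemma dot_comm m x y : dot m x y = dot m y x.
Proof. induction m; simpl; auto. rewrite IHm; ring. Qed.

Lemma dot_lin_l m a b x y z :
  dot m (fun i => a * x i + b * y i) z = a * dot m x z + b * dot m y z.
Proof. induction m; simpl. ring. rewrite IHm; ring. Qed.

Lemma dot_lin m a b c d x y :
  dot m (fun i => a * x i + b * y i) (fun i => c * x i + d * y i) =
  a * c * dot m x x + (a * d + b * c) * dot m x y + b * d * dot m y y.
Proof.
  rewrite dot_lin_l, !(dot_comm m _ (fun i => c * x i + d * y i)), !dot_lin_l.
  rewrite (dot_comm m y x). ring.
Qed.

Lemma dot_scal_l m a x z : dot m (fun i => a * x i) z = a * dot m x z.
Proof. induction m; simpl. ring. rewrite IHm; ring. Qed.

Lemma dot_vscal_l m a x y : dot m (vscal a x) y = a * dot m x y.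
Proof. apply dot_scal_l. Qed.

Lemma dot_vopp_l m x y : dot m (vopp x) y = - dot m x y.
Proof. induction m; simpl. ring. unfold vopp in *. rewrite IHm. ring. Qed.

Lemma dot_sub_l m x y z : dot m (fun i => x i - y i) z = dot m x z - dot m y z.
Proof. induction m; simpl. ring. rewrite IHm; ring. Qed.

Lemma dot_zero_l m x y : (forall i, (i < m)%nat -> x i = 0) -> dot m x y = 0.
Proof.
  induction m; simpl; intros H; auto.
  rewrite IHm, (H m) by (intros; apply H; lia) || lia. ring.
Qed.

Lemma dot_self_ge0 m x : 0 <= dot m x x.
Proof. induction m; simpl. lra. nra. Qed.

Lemma coord_sqr_le_dot m x i : (i < m)%nat -> x i * x i <= dot m x x.
Proof.
  induction m; intros Hi; [lia|]. simpl.
  destruct (Nat.eq_dec i m) as [->|].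
  - pose proof (dot_self_ge0 m x). lra.
  - assert (x i * x i <= dot m x x) by (apply IHm; lia). nra.
Qed.

Lemma dot_self_eq0 m x : dot m x x = 0 -> forall i, (i < m)%nat -> x i = 0.
Proof. intros H i Hi. pose proof (coord_sqr_le_dot m x i Hi). nra. Qed.

Lemma Cauchy_Schwarz m x y : dot m x y * dot m x y <= dot m x x * dot m y y.
Proof.
  destruct (Req_dec (dot m y y) 0) as [H0|H0].
  - rewrite (dot_comm m x y), (dot_zero_l m y x) by (apply dot_self_eq0; auto).
    rewrite H0; lra.
  - pose proof (dot_self_ge0 m y).
    set (s := dot m x y / dot m y y).
    pose proof (dot_self_ge0 m (fun i => 1 * x i + (- s) * y i)) as Hq.
    rewrite dot_lin in Hq. unfold s in Hq. field_simplify in Hq; [|lra].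
    apply Rmult_le_compat_r with (r := dot m y y) in Hq; [|lra].
    unfold Rdiv in Hq. rewrite Rmult_assoc, Rinv_l in Hq by lra. lra.
Qed.

Lemma dot_self_vnorm m x : dot m x x = vnorm m x * vnorm m x.
Proof. unfold vnorm. rewrite sqrt_sqrt; auto. apply dot_self_ge0. Qed.

Lemma vnorm_ge0 m x : 0 <= vnorm m x.
Proof. apply sqrt_pos. Qed.

Lemma vnorm_gt0 m x : 0 < dot m x x -> 0 < vnorm m x.
Proof. apply sqrt_lt_R0. Qed.

Lemma vnorm_sphere m x : on_sphere m x -> vnorm m x = 1.
Proof. unfold vnorm, on_sphere; intros ->; apply sqrt_1. Qed.

Lemma vnorm_lt m x e : 0 < e -> dot m x x < e * e -> vnorm m x < e.
Proof.
  intros He H. unfold vnorm. rewrite <- (sqrt_square e) by lra.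
  apply sqrt_lt_1_alt; split; [apply dot_self_ge0|exact H].
Qed.

Lemma vnorm_vscal m a x : vnorm m (vscal a x) = Rabs a * vnorm m x.
Proof.
  unfold vnorm. rewrite dot_vscal_l, dot_comm, dot_vscal_l, <- Rmult_assoc.
  rewrite sqrt_mult_alt by (pose proof (Rle_0_sqr a); unfold Rsqr in *; lra).
  rewrite <- Rsqr_def, sqrt_Rsqr_abs. auto.
Qed.

Lemma vnorm_vsub_vscal m a b v : vnorm m (vsub (vscal a v) (vscal b v)) = Rabs (a - b) * vnorm m v.
Proof.
  replace (vsub (vscal a v) (vscal b v)) with (vscal (a - b) v)
    by (apply functional_extensionality; intros; unfold vsub, vscal; ring).
  apply vnorm_vscal.
Qed.

Lemma vnorm_vsub_diag m p : vnorm m (vsub p p) = 0.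
Proof. unfold vnorm. rewrite dot_zero_l by (intros; unfold vsub; ring). apply sqrt_0. Qed.

Lemma Cauchy_Schwarz_abs m x y : Rabs (dot m x y) <= vnorm m x * vnorm m y.
Proof.
  unfold vnorm. rewrite <- sqrt_mult by apply dot_self_ge0.
  rewrite <- sqrt_Rsqr_abs. apply sqrt_le_1_alt. apply Cauchy_Schwarz.
Qed.

Lemma Rabs_coord_le_vnorm m x i : (i < m)%nat -> Rabs (x i) <= vnorm m x.
Proof.
  intros Hi. unfold vnorm. rewrite <- sqrt_Rsqr_abs. apply sqrt_le_1_alt.
  apply coord_sqr_le_dot; auto.
Qed.

Lemma vnorm_le_S m x : vnorm m x <= vnorm (S m) x.
Proof. unfold vnorm. apply sqrt_le_1_alt. simpl. nra. Qed.

Lemma dot_sphere_bound m x y : on_sphere m x -> on_sphere m y -> -1 <= dot m x y <= 1.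
Proof.
  intros Hx Hy. pose proof (Cauchy_Schwarz_abs m x y) as H.
  rewrite !vnorm_sphere in H by auto. apply Rabs_le_between in H. lra.
Qed.

Lemma dot_sphere_lipschitz m P Y Q : on_sphere m P ->
  Rabs (dot m P Y - dot m P Q) <= vnorm m (vsub Y Q).
Proof.
  intros HP. rewrite !(dot_comm m P), <- dot_sub_l.
  pose proof (Cauchy_Schwarz_abs m (vsub Y Q) P) as H.
  rewrite (vnorm_sphere m P), Rmult_1_r in H by auto. exact H.
Qed.

Definition normalize m (x : vec) : vec := vscal (/ vnorm m x) x.

Lemma normalize_sphere m x : 0 < vnorm m x -> on_sphere m (normalize m x).
Proof.
  intros H. unfold on_sphere, normalize.
  rewrite dot_vscal_l, dot_comm, dot_vscal_l, dot_self_vnorm. field. lra.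
Qed.

Lemma dot_normalize m x : 0 < vnorm m x -> dot m x (normalize m x) = vnorm m x.
Proof.
  intros H. unfold normalize. rewrite dot_comm, dot_vscal_l, dot_self_vnorm. field. lra.
Qed.

Lemma normalize_scal m x i : 0 < vnorm m x -> vscal (vnorm m x) (normalize m x) i = x i.
Proof. intros H. unfold normalize, vscal. field. lra. Qed.

Lemma sphere_coord_bound m t i : on_sphere m t -> (i < m)%nat -> Rabs (t i) <= 1.
Proof. intros H Hi. rewrite <- (vnorm_sphere m t H). apply Rabs_coord_le_vnorm; auto. Qed.

(** * Sequential compactness *)

Lemma Rinv_INR_S_small eps : 0 < eps -> exists N, forall k, (N <= k)%nat -> / INR (S k) < eps.
Proof.
  intros He. destruct (INR_archimed eps 1 He) as [N HN]. exists N. intros k Hk.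
  apply le_INR in Hk. rewrite S_INR. pose proof (pos_INR k).
  apply (Rmult_lt_reg_l (INR k + 1)); [lra|]. rewrite Rinv_r by lra. nra.
Qed.

Lemma INR_large x : exists N, forall k, (N <= k)%nat -> x < INR k.
Proof.
  destruct (INR_archimed 1 x Rlt_0_1) as [N HN]. exists N. intros k Hk.
  apply le_INR in Hk. lra.
Qed.

Definition subseq_index (phi : nat -> nat) := forall j, (phi j < phi (S j))%nat.

Lemma subseq_index_ge phi : subseq_index phi -> forall j, (j <= phi j)%nat.
Proof. intros H j; induction j; [lia|]. specialize (H j). lia. Qed.

Lemma subseq_index_comp f h : subseq_index f -> subseq_index h -> subseq_index (fun j => f (h j)).
Proof.
  intros Hf Hh j. specialize (Hh j).
  assert (Hlt : forall a b, (a < b)%nat -> (f a < f b)%nat).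
  { intros a b Hab. induction Hab; [apply Hf|]. specialize (Hf m). lia. }
  apply Hlt; auto.
Qed.

Lemma Un_cv_subseq w L phi : Un_cv w L -> subseq_index phi -> Un_cv (fun j => w (phi j)) L.
Proof.
  intros Hw Hp eps He. destruct (Hw eps He) as [N HN]. exists N.
  intros j Hj. apply HN. pose proof (subseq_index_ge phi Hp j). lia.
Qed.

Lemma Un_cv_const c : Un_cv (fun _ => c) c.
Proof. intros e He; exists O; intros; unfold R_dist; rewrite Rminus_diag, Rabs_R0; auto. Qed.

Lemma bounded_Rseq_cv_subseq (v : nat -> R) M : (forall j, Rabs (v j) <= M) ->
  exists phi, subseq_index phi /\ exists a, Un_cv (fun j => v (phi j)) a.
Proof.
  intros Hb.
  destruct (Bolzano_Weierstrass v (fun c => -M <= c <= M) (compact_P3 (-M) M)) as [a Ha].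
  { intros j. apply Rabs_le_between; auto. }
  assert (F : forall N j, {p | (N <= p)%nat /\ Rabs (v p - a) < / INR (S j)}).
  { intros N j. apply constructive_indefinite_description.
    assert (Hpos : 0 < / INR (S j)) by (apply Rinv_0_lt_compat, lt_0_INR; lia).
    destruct (Ha (disc a (mkposreal _ Hpos)) N) as [p [Hp1 Hp2]].
    { exists (mkposreal _ Hpos). intros x Hx; exact Hx. }
    exists p. split; auto. }
  set (phi := fix phi j := match j with O => proj1_sig (F 0%nat 0%nat)
                           | S j' => proj1_sig (F (S (phi j')) (S j')) end).
  assert (Hphi : forall j, Rabs (v (phi j) - a) < / INR (S j)).
  { intros [|j]; exact (proj2 (proj2_sig (F _ _))). }
  exists phi. split.
  - intros j. exact (proj1 (proj2_sig (F (S (phi j)) (S j)))).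
  - exists a. intros eps He. destruct (Rinv_INR_S_small eps He) as [N HN]. exists N.
    intros j Hj. unfold R_dist. specialize (HN j Hj). specialize (Hphi j). lra.
Qed.

Lemma bounded_vseq_cv_subseq m (u : nat -> vec) M :
  (forall j i, (i < m)%nat -> Rabs (u j i) <= M) ->
  exists phi, subseq_index phi /\ exists l : vec,
    forall i, (i < m)%nat -> Un_cv (fun j => u (phi j) i) (l i).
Proof.
  induction m as [|m IH]; intros Hb.
  - exists (fun j => j). split; [intros j; lia|]. exists (fun _ => 0). intros; lia.
  - destruct IH as [phi [Hphi [l Hl]]]; [intros; apply Hb; lia|].
    destruct (bounded_Rseq_cv_subseq (fun j => u (phi j) m) M) as [psi [Hpsi [a Ha]]].
    { intros; apply Hb; lia. }
    exists (fun j => phi (psi j)). split; [apply subseq_index_comp; auto|].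
    exists (fun i => if Nat.eq_dec i m then a else l i). intros i Hi.
    destruct (Nat.eq_dec i m) as [->|]; [exact Ha|].
    apply (Un_cv_subseq (fun j => u (phi j) i)); auto. apply Hl; lia.
Qed.

Lemma dot_cv m (a b : nat -> vec) x y :
  (forall i, (i < m)%nat -> Un_cv (fun j => a j i) (x i)) ->
  (forall i, (i < m)%nat -> Un_cv (fun j => b j i) (y i)) ->
  Un_cv (fun j => dot m (a j) (b j)) (dot m x y).
Proof.
  induction m; intros Ha Hb; simpl; [apply Un_cv_const|].
  apply CV_plus; [apply IHm; intros; [apply Ha|apply Hb]; lia|].
  apply CV_mult; [apply Ha|apply Hb]; lia.
Qed.

Lemma vnorm_sub_cv m (a : nat -> vec) x :
  (forall i, (i < m)%nat -> Un_cv (fun j => a j i) (x i)) ->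
  forall eps, 0 < eps -> exists N, forall j, (N <= j)%nat -> vnorm m (vsub (a j) x) < eps.
Proof.
  intros Ha eps He.
  assert (H : Un_cv (fun j => dot m (vsub (a j) x) (vsub (a j) x)) (dot m (vsub x x) (vsub x x))).
  { apply dot_cv; intros i Hi; unfold vsub; apply CV_minus; auto; apply Un_cv_const. }
  rewrite (dot_zero_l m (vsub x x)) in H by (intros; unfold vsub; ring).
  destruct (H (eps * eps) ltac:(nra)) as [N HN]. exists N. intros j Hj.
  apply vnorm_lt; auto. specialize (HN j Hj). unfold R_dist in HN.
  rewrite Rminus_0_r in HN. apply Rabs_lt_between in HN. lra.
Qed.

(** * The Wulff shape and its polar *)

Section WulffShape.

Variables (n : nat) (g : vec -> R).
Hypothesis gpos : forall t, on_sphere (S n) t -> 0 < g t.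
Hypothesis gcont : cont_on_sphere (S n) g.

Lemma Wulff_ext a b : (forall i, (i < S n)%nat -> a i = b i) -> Wulff n g a -> Wulff n g b.
Proof. intros E H t Ht. rewrite <- (dot_extl (S n) a b t); auto. Qed.

Lemma Wulff_closed p :
  (forall eps, 0 < eps -> exists y, vnorm (S n) (vsub y p) < eps /\ Wulff n g y) ->
  Wulff n g p.
Proof.
  intros H t Ht. apply Rnot_lt_le; intros Hc.
  destruct (H (dot (S n) p t - g t) ltac:(lra)) as [y [Hy1 Hy2]].
  specialize (Hy2 t Ht). pose proof (dot_sphere_lipschitz (S n) t y p Ht) as Hl.
  rewrite !(dot_comm (S n) t) in Hl. apply Rabs_le_between in Hl. lra.
Qed.

Lemma Wulff_origin : Wulff n g (fun _ => 0).
Proof. intros t Ht. rewrite dot_zero_l by auto. apply Rlt_le, gpos; auto. Qed.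

Lemma cont_sphere_cv_subseq (t : nat -> vec) : (forall j, on_sphere (S n) (t j)) ->
  exists phi, subseq_index phi /\ exists l, on_sphere (S n) l /\
    Un_cv (fun j => g (t (phi j))) (g l).
Proof.
  intros Ht. destruct (bounded_vseq_cv_subseq (S n) t 1) as [phi [Hphi [l Hl]]].
  { intros j i Hi. apply (sphere_coord_bound (S n)); auto. }
  assert (Hls : on_sphere (S n) l).
  { apply (UL_sequence (fun j => dot (S n) (t (phi j)) (t (phi j)))).
    - apply dot_cv; auto.
    - intros e He; exists O; intros j _. unfold R_dist.
      rewrite (Ht (phi j)), Rminus_diag, Rabs_R0; auto. }
  exists phi. split; auto. exists l. split; auto.
  intros eps He. destruct (gcont l Hls eps He) as [d [Hd Hd2]].
  destruct (vnorm_sub_cv (S n) (fun j => t (phi j)) l Hl d Hd) as [N HN].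
  exists N. intros j Hj. apply Hd2; auto.
Qed.

Lemma gamma_lower_bound : exists c, 0 < c /\ forall t, on_sphere (S n) t -> c <= g t.
Proof.
  apply NNPP; intros Hn.
  assert (F : forall j : nat, {t | on_sphere (S n) t /\ g t < / INR (S j)}).
  { intros j. apply constructive_indefinite_description. apply NNPP; intros Hj.
    apply Hn. exists (/ INR (S j)). split; [apply Rinv_0_lt_compat, lt_0_INR; lia|].
    intros t Ht. apply Rnot_lt_le; intros Hc. apply Hj; exists t; auto. }
  destruct (cont_sphere_cv_subseq (fun j => proj1_sig (F j))) as [phi [Hphi [l [Hl Hc]]]].
  { intros j; exact (proj1 (proj2_sig (F j))). }
  pose proof (gpos l Hl).
  destruct (Hc (g l / 2) ltac:(lra)) as [N1 HN1].
  destruct (Rinv_INR_S_small (g l / 2) ltac:(lra)) as [N2 HN2].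
  set (j := max N1 N2).
  specialize (HN1 j ltac:(lia)). unfold R_dist in HN1.
  specialize (HN2 (phi j) ltac:(pose proof (subseq_index_ge phi Hphi j); lia)).
  pose proof (proj2 (proj2_sig (F (phi j)))).
  apply Rabs_lt_between in HN1. lra.
Qed.

Lemma gamma_upper_bound : exists M, forall t, on_sphere (S n) t -> g t <= M.
Proof.
  apply NNPP; intros Hn.
  assert (F : forall j : nat, {t | on_sphere (S n) t /\ INR j < g t}).
  { intros j. apply constructive_indefinite_description. apply NNPP; intros Hj.
    apply Hn. exists (INR j).
    intros t Ht. apply Rnot_lt_le; intros Hc. apply Hj; exists t; auto. }
  destruct (cont_sphere_cv_subseq (fun j => proj1_sig (F j))) as [phi [Hphi [l [Hl Hc]]]].
  { intros j; exact (proj1 (proj2_sig (F j))). }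
  destruct (Hc 1 ltac:(lra)) as [N1 HN1].
  destruct (INR_large (g l + 1)) as [N2 HN2].
  set (j := max N1 N2).
  specialize (HN1 j ltac:(lia)). unfold R_dist in HN1.
  specialize (HN2 (phi j) ltac:(pose proof (subseq_index_ge phi Hphi j); lia)).
  pose proof (proj2 (proj2_sig (F (phi j)))).
  apply Rabs_lt_between in HN1. lra.
Qed.

Lemma Wulff_contains_ball : exists d, 0 < d /\ forall y, vnorm (S n) y <= d -> Wulff n g y.
Proof.
  destruct gamma_lower_bound as [c [Hc Hc2]]. exists c. split; auto.
  intros y Hy t Ht. pose proof (Cauchy_Schwarz_abs (S n) y t) as H.
  rewrite (vnorm_sphere _ t Ht) in H. apply Rabs_le_between in H.
  specialize (Hc2 t Ht). lra.
Qed.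

Lemma Wulff_bounded : exists M, 0 <= M /\ forall y, Wulff n g y -> vnorm (S n) y <= M.
Proof.
  destruct gamma_upper_bound as [M HM]. exists (Rmax M 0). split; [apply Rmax_r|].
  intros y Hy. destruct (Req_dec (vnorm (S n) y) 0) as [E|E]; [rewrite E; apply Rmax_r|].
  assert (Hp : 0 < vnorm (S n) y) by (pose proof (vnorm_ge0 (S n) y); lra).
  specialize (Hy _ (normalize_sphere _ _ Hp)). rewrite dot_normalize in Hy by auto.
  specialize (HM _ (normalize_sphere _ _ Hp)). pose proof (Rmax_l M 0). lra.
Qed.

Lemma Wulff_dot_min z :
  exists y0, Wulff n g y0 /\ forall y, Wulff n g y -> dot (S n) y0 z <= dot (S n) y z.
Proof.
  destruct Wulff_bounded as [M [HM0 HM]].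
  set (E := fun r => exists y, Wulff n g y /\ r = - dot (S n) y z).
  destruct (completeness E) as [s [Hs1 Hs2]].
  { exists (M * vnorm (S n) z). intros r [y [Hy ->]].
    pose proof (Cauchy_Schwarz_abs (S n) y z) as H. apply Rabs_le_between in H.
    specialize (HM y Hy). pose proof (vnorm_ge0 (S n) z). nra. }
  { exists (- dot (S n) (fun _ => 0) z). exists (fun _ => 0); split; auto.
    apply Wulff_origin. }
  assert (F : forall j : nat, {y | Wulff n g y /\ s - / INR (S j) < - dot (S n) y z}).
  { intros j. apply constructive_indefinite_description. apply NNPP; intros Hj.
    assert (0 < / INR (S j)) by (apply Rinv_0_lt_compat, lt_0_INR; lia).
    assert (s <= s - / INR (S j)); [|lra].
    apply Hs2. intros r [y [Hy ->]]. apply Rnot_lt_le; intros Hc. apply Hj. exists y; auto. }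
  destruct (bounded_vseq_cv_subseq (S n) (fun j => proj1_sig (F j)) M) as [phi [Hphi [l Hl]]].
  { intros j i Hi. eapply Rle_trans; [apply (Rabs_coord_le_vnorm (S n)); auto|].
    apply HM. exact (proj1 (proj2_sig (F j))). }
  assert (Gl : Wulff n g l).
  { apply Wulff_closed. intros eps He.
    destruct (vnorm_sub_cv _ _ _ Hl eps He) as [N HN]. exists (proj1_sig (F (phi N))).
    split; [apply HN; lia|exact (proj1 (proj2_sig (F (phi N))))]. }
  exists l. split; auto.
  assert (Hlz : dot (S n) l z <= - s).
  { apply Rnot_lt_le; intros Hc.
    set (e := (dot (S n) l z + s) / 2).
    assert (He : 0 < e) by (unfold e; lra).
    destruct (dot_cv (S n) (fun j => proj1_sig (F (phi j))) (fun _ => z) l z Hl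
      (fun i _ => Un_cv_const (z i)) e He) as [N1 HN1].
    destruct (Rinv_INR_S_small e He) as [N2 HN2].
    set (j := max N1 N2). specialize (HN1 j ltac:(lia)).
    specialize (HN2 (phi j) ltac:(pose proof (subseq_index_ge phi Hphi j); lia)).
    pose proof (proj2 (proj2_sig (F (phi j)))). unfold R_dist in HN1.
    apply Rabs_lt_between in HN1. unfold e in *. lra. }
  intros y Hy. assert (- dot (S n) y z <= s) by (apply Hs1; exists y; auto). lra.
Qed.

Lemma Wulff_radial_boundary u s : on_sphere (S n) u -> 0 < s -> Wulff n g (vscal s u) ->
  exists r, s <= r /\ boundary (S n) (Wulff n g) (vscal r u).
Proof.
  intros Hu Hs Gs.
  set (E := fun r => 0 <= r /\ Wulff n g (vscal r u)).
  destruct (completeness E) as [r [Hr1 Hr2]].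
  { exists (g u). intros rho [_ H1]. specialize (H1 u Hu).
    rewrite dot_vscal_l, Hu, Rmult_1_r in H1. auto. }
  { exists s. split; [lra|auto]. }
  assert (Hsr : s <= r) by (apply Hr1; split; [lra|auto]).
  exists r. split; auto. intros eps He. split.
  - exists (vscal r u). split; [rewrite vnorm_vsub_diag; auto|].
    apply Wulff_closed. intros e' He'.
    assert (exists rho, E rho /\ r - e' < rho) as [rho [Hrho1 Hrho2]].
    { apply NNPP; intros Hc. assert (r <= r - e'); [|lra]. apply Hr2.
      intros rho Hrho. apply Rnot_lt_le; intros Hc2. apply Hc; exists rho; auto. }
    exists (vscal rho u). split; [|apply Hrho1].
    rewrite vnorm_vsub_vscal, (vnorm_sphere _ _ Hu).
    assert (rho <= r) by (apply Hr1; auto). rewrite Rabs_left1 by lra. lra.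
  - exists (vscal (r + eps / 2) u). split.
    + rewrite vnorm_vsub_vscal, (vnorm_sphere _ _ Hu), Rabs_right by lra. lra.
    + intros Hc. assert (r + eps / 2 <= r); [|lra]. apply Hr1. split; auto. lra.
Qed.

(* [polar] is the polar body of [-W]: the antipode [-t] in the definition of the
   dual Wulff shape is absorbed into the sign of the constraint. *)
Definition polar (x : vec) := forall y, Wulff n g y -> -1 <= dot (S n) x y.

Lemma polar_ext a b : (forall i, (i < S n)%nat -> a i = b i) -> polar a -> polar b.
Proof. intros E H y Hy. rewrite <- (dot_extl (S n) a b y); auto. Qed.

Lemma dual_Wulff_polar x : dual_Wulff n g x -> polar x.
Proof.
  intros HD y Hy.
  destruct (Req_dec (vnorm (S n) y) 0) as [E0|E0].
  { pose proof (Cauchy_Schwarz_abs (S n) x y) as H. rewrite E0, Rmult_0_r in H.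
    apply Rabs_le_between in H. lra. }
  assert (Hp : 0 < vnorm (S n) y) by (pose proof (vnorm_ge0 (S n) y); lra).
  set (u := normalize (S n) y).
  assert (Hu : on_sphere (S n) u) by (apply normalize_sphere; auto).
  destruct (Wulff_radial_boundary u (vnorm (S n) y) Hu Hp) as [r [Hyr Hb]].
  { apply (Wulff_ext y); auto. intros; symmetry; apply normalize_scal; auto. }
  assert (Hs : on_sphere (S n) (vopp u)).
  { unfold on_sphere. rewrite dot_vopp_l, dot_comm, dot_vopp_l, Hu. ring. }
  replace (vscal r u) with (vscal r (vopp (vopp u))) in Hb
    by (apply functional_extensionality; intros; unfold vscal, vopp; ring).
  specialize (HD _ Hs r ltac:(lra) Hb).
  rewrite dot_comm, dot_vopp_l, dot_comm in HD.
  rewrite (dot_comm (S n) x y),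
    (dot_extl (S n) y (vscal (vnorm (S n) y) u) x) by (intros; rewrite normalize_scal; auto).
  rewrite dot_vscal_l, (dot_comm (S n) u x).
  assert (- / r <= dot (S n) x u) by (unfold Rdiv in HD; lra).
  assert (0 < / r) by (apply Rinv_0_lt_compat; lra).
  assert (vnorm (S n) y * / r <= 1).
  { apply (Rmult_le_reg_r r); [lra|]. rewrite Rmult_assoc, Rinv_l by lra. lra. }
  nra.
Qed.

Lemma polar_dual_Wulff x : polar x -> dual_Wulff n g x.
Proof.
  intros HD t Ht r Hr Hb.
  assert (HG : Wulff n g (vscal r (vopp t))).
  { apply Wulff_closed. intros eps He. destruct (Hb eps He) as [[y Hy] _]. exists y; auto. }
  specialize (HD _ HG). rewrite dot_comm, dot_vscal_l, dot_vopp_l, dot_comm in HD.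
  unfold Rdiv. rewrite Rmult_1_l.
  apply (Rmult_le_reg_l r); auto. rewrite Rinv_r by lra. lra.
Qed.

End WulffShape.

(** * Spherical geometry and the gnomonic lift *)

Lemma PI_minus_acos_ge_PI2 d : -1 <= d <= 1 -> (PI / 2 <= PI - acos d <-> 0 <= d).
Proof.
  intros Hd. rewrite acos_asin by auto. pose proof (asin_bound d). pose proof PI_RGT_0.
  rewrite <- (sin_asin d) at 2 by auto. split; intros Hx.
  - apply sin_ge_0; lra.
  - apply Rnot_lt_le; intros Hc. assert (sin (asin d) < 0) by (apply sin_lt_0_var; lra). lra.
Qed.

Lemma PI_minus_acos_eq_PI2 d : -1 <= d <= 1 -> PI - acos d = PI / 2 -> d = 0.
Proof.
  intros Hd H. rewrite <- (cos_acos d) by auto. replace (acos d) with (PI / 2) by lra.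
  apply cos_PI2.
Qed.

Lemma sphere_orth_escape m P Q : on_sphere m P -> on_sphere m Q -> dot m P Q = 0 ->
  forall eps, 0 < eps -> exists Y, on_sphere m Y /\ vnorm m (vsub Y Q) < eps /\ dot m P Y < 0.
Proof.
  intros HP HQ H0 eps He.
  set (s := Rmin (1/2) (eps/2)).
  assert (Hs : 0 < s <= 1/2 /\ s <= eps / 2).
  { unfold s. split; [split|]; [apply Rmin_pos; lra|apply Rmin_l|apply Rmin_r]. }
  set (a := sqrt (1 - s * s)).
  assert (Ha2 : a * a = 1 - s * s) by (unfold a; apply sqrt_sqrt; nra).
  assert (Ha : 1 - s * s <= a).
  { assert (0 <= a) by apply sqrt_pos. assert (a <= 1).
    { unfold a. rewrite <- sqrt_1 at 2. apply sqrt_le_1_alt; nra. } nra. }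
  rewrite dot_comm in H0.
  exists (fun i => a * Q i + (- s) * P i). split; [|split].
  - unfold on_sphere. rewrite dot_lin, HQ, HP, H0. nra.
  - replace (vsub (fun i => a * Q i + - s * P i) Q) with (fun i => (a - 1) * Q i + (- s) * P i)
      by (apply functional_extensionality; intros; unfold vsub; ring).
    apply vnorm_lt; auto. rewrite dot_lin, HQ, HP, H0. nra.
  - rewrite dot_comm, dot_lin_l, H0, HP. nra.
Qed.

Lemma hemi_boundary_orth m P Q : on_sphere m P -> sph_boundary m (hemi m P) Q ->
  0 <= dot m P Q -> dot m P Q = 0.
Proof.
  intros HP [HQ Hb] H. destruct (Req_dec (dot m P Q) 0) as [|Hne]; auto.
  destruct (Hb (dot m P Q) ltac:(lra)) as [_ [Y [HY1 [HY2 HY3]]]].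
  exfalso. apply HY3. split; auto.
  pose proof (dot_sphere_lipschitz m P Y Q HP) as Hl. apply Rabs_le_between in Hl. lra.
Qed.

Lemma sph_boundary_orth m A P Q : on_sphere m P -> on_sphere m Q -> A Q ->
  dot m P Q = 0 -> (forall Y, A Y -> 0 <= dot m P Y) ->
  sph_boundary m A Q /\ sph_boundary m (hemi m P) Q.
Proof.
  intros HP HQ AQ H0 HA.
  assert (HQP : hemi m P Q) by (split; [auto|lra]).
  split; split; auto; intros eps He; split;
    try (exists Q; rewrite vnorm_vsub_diag; auto; fail);
    destruct (sphere_orth_escape m P Q HP HQ H0 eps He) as [Y [HY1 [HY2 HY3]]];
    exists Y; repeat split; auto.
  - intros AY. specialize (HA Y AY). lra.
  - intros [_ HY]. lra.
Qed.

Lemma orth_neq m P Q : on_sphere m P -> dot m P Q = 0 -> ~ veq m Q P /\ ~ veq m Q (vopp P).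
Proof.
  intros HP H0. split; intros E.
  - rewrite dot_comm, (dot_extl m Q P P) in H0 by (intros; apply E; auto).
    unfold on_sphere in HP. lra.
  - rewrite dot_comm, (dot_extl m Q (vopp P) P) in H0 by (intros; apply E; auto).
    rewrite dot_vopp_l in H0. unfold on_sphere in HP. lra.
Qed.

(* [lift n x] is alpha_N^-1 (Id x); the last coordinate [S n] of R^(n+2) is that of N. *)
Definition lift_scale n (x : vec) := / sqrt (1 + dot (S n) x x).

Definition lift n (x : vec) : vec :=
  fun i => if Nat.eq_dec i (S n) then lift_scale n x else lift_scale n x * x i.

Definition central_proj n (P : vec) : vec := fun i => P i / P (S n).

Lemma lift_scale_pos n x : 0 < lift_scale n x.
Proof.
  unfold lift_scale. apply Rinv_0_lt_compat, sqrt_lt_R0.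
  pose proof (dot_self_ge0 (S n) x). lra.
Qed.

Lemma lift_last n x : lift n x (S n) = lift_scale n x.
Proof. unfold lift. destruct Nat.eq_dec; [auto|lia]. Qed.

Lemma lift_coord n x i : (i < S n)%nat -> lift n x i = lift_scale n x * x i.
Proof. intros Hi. unfold lift. destruct Nat.eq_dec; [lia|auto]. Qed.

Lemma central_proj_lift n x i : (i < S n)%nat -> central_proj n (lift n x) i = x i.
Proof.
  intros Hi. unfold central_proj. rewrite lift_last, lift_coord by auto.
  pose proof (lift_scale_pos n x). field. lra.
Qed.

Lemma dot_lift_l n x y : dot (S n) (lift n x) y = lift_scale n x * dot (S n) x y.
Proof. rewrite <- dot_scal_l. apply dot_extl. intros; apply lift_coord; auto. Qed.

Lemma lift_sphere n x : on_sphere (S (S n)) (lift n x).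
Proof.
  unfold on_sphere. change (dot (S (S n)) (lift n x) (lift n x)) with
    (dot (S n) (lift n x) (lift n x) + lift n x (S n) * lift n x (S n)).
  rewrite lift_last, dot_lift_l, dot_comm, dot_lift_l.
  unfold lift_scale. pose proof (dot_self_ge0 (S n) x).
  rewrite <- Rmult_assoc, <- Rinv_mult, sqrt_sqrt by lra. field. lra.
Qed.

Lemma dot_central_proj n X Y : X (S n) <> 0 -> Y (S n) <> 0 ->
  dot (S (S n)) X Y = X (S n) * Y (S n) * (dot (S n) (central_proj n X) (central_proj n Y) + 1).
Proof.
  intros HX HY. change (dot (S (S n)) X Y) with (dot (S n) X Y + X (S n) * Y (S n)).
  rewrite (dot_ext (S n) X (fun i => X (S n) * central_proj n X i)
                         Y (fun i => Y (S n) * central_proj n Y i)).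
  - rewrite dot_scal_l, dot_comm, dot_scal_l, dot_comm. ring.
  - intros i Hi. unfold central_proj. split; field; auto.
Qed.

Lemma dot_lift n x y :
  dot (S (S n)) (lift n x) (lift n y) = lift_scale n x * lift_scale n y * (dot (S n) x y + 1).
Proof.
  pose proof (lift_scale_pos n x). pose proof (lift_scale_pos n y).
  rewrite dot_central_proj, !lift_last by (rewrite lift_last; lra).
  rewrite (dot_ext (S n) _ x _ y) by (intros; split; apply central_proj_lift; auto). auto.
Qed.

Lemma lift_veq n p q : veq (S (S n)) (lift n q) (lift n p) -> forall i, (i < S n)%nat -> q i = p i.
Proof.
  intros V i Hi. rewrite <- (central_proj_lift n q i Hi), <- (central_proj_lift n p i Hi).
  unfold central_proj. rewrite !V by lia. auto.
Qed.

Lemma lift_neq_vopp n p q : ~ veq (S (S n)) (lift n q) (vopp (lift n p)).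
Proof.
  intros V. specialize (V (S n) ltac:(lia)). unfold vopp in V. rewrite !lift_last in V.
  pose proof (lift_scale_pos n p). pose proof (lift_scale_pos n q). lra.
Qed.

(** * The induced spherical body *)

Section InducedBody.

Variables (n : nat) (g : vec -> R).
Hypothesis gpos : forall t, on_sphere (S n) t -> 0 < g t.
Hypothesis gcont : cont_on_sphere (S n) g.

Local Notation T := (induced n (Wulff n g)).
Local Notation polar := (polar n g).

Lemma induced_lift x : Wulff n g x -> T (lift n x).
Proof.
  intros H. split; [apply lift_sphere|split]; [rewrite lift_last; apply lift_scale_pos|].
  apply (Wulff_ext n g x); auto. intros i Hi. symmetry. apply (central_proj_lift n x i Hi).
Qed.

Lemma induced_boundary_cone Q : sph_boundary (S (S n)) T Q ->
  forall t, on_sphere (S n) t -> dot (S n) Q t <= g t * Q (S n).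
Proof.
  intros [_ Hb] t Ht. apply Rnot_lt_le; intros Hc. pose proof (gpos t Ht).
  set (c := dot (S n) Q t - g t * Q (S n)).
  set (e := c / (1 + g t)).
  assert (Ee : e * (1 + g t) = c) by (unfold e; field; lra).
  destruct (Hb e ltac:(unfold e, c; apply Rdiv_lt_0_compat; lra))
    as [[Y [_ [HY2 [_ [Yk GY]]]]] _].
  specialize (GY t Ht).
  assert (EY : dot (S n) Y t = Y (S n) * dot (S n) (central_proj n Y) t).
  { rewrite <- dot_scal_l. apply dot_extl. intros; unfold central_proj; field; lra. }
  assert (dot (S n) Y t <= g t * Y (S n)) by (unfold central_proj in EY; nra).
  pose proof (dot_sphere_lipschitz (S n) t Y Q Ht) as H1.
  rewrite !(dot_comm (S n) t) in H1. apply Rabs_le_between in H1.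
  pose proof (vnorm_le_S (S n) (vsub Y Q)).
  pose proof (Rabs_coord_le_vnorm (S (S n)) (vsub Y Q) (S n) ltac:(lia)) as H3.
  unfold vsub in H3 at 1. apply Rabs_le_between in H3.
  assert (g t * (Y (S n) - Q (S n)) >= - (g t * e)) by nra.
  unfold c in Ee. nra.
Qed.

Lemma cone_last_pos Q : on_sphere (S (S n)) Q ->
  (forall t, on_sphere (S n) t -> dot (S n) Q t <= g t * Q (S n)) -> 0 < Q (S n).
Proof.
  intros HQ Tp. apply Rnot_le_lt; intros Hc.
  destruct (Req_dec (dot (S n) Q Q) 0) as [E|E].
  - assert (Qk : Q (S n) = -1).
    { unfold on_sphere in HQ. change (dot (S n) Q Q + Q (S n) * Q (S n) = 1) in HQ. nra. }
    set (e := fun i => if Nat.eq_dec i n then 1 else 0).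
    assert (He : on_sphere (S n) e).
    { unfold on_sphere. change (dot n e e + e n * e n = 1).
      rewrite dot_zero_l; [unfold e; destruct Nat.eq_dec; [ring|lia]|].
      intros i Hi. unfold e. destruct Nat.eq_dec; [lia|auto]. }
    specialize (Tp e He). pose proof (gpos e He).
    rewrite dot_zero_l in Tp by (apply dot_self_eq0; auto). nra.
  - pose proof (dot_self_ge0 (S n) Q).
    assert (Hp : 0 < vnorm (S n) Q) by (apply vnorm_gt0; lra).
    specialize (Tp _ (normalize_sphere _ _ Hp)). rewrite dot_normalize in Tp by auto.
    pose proof (gpos _ (normalize_sphere _ _ Hp)). nra.
Qed.

Lemma induced_closed Q : sph_boundary (S (S n)) T Q -> T Q.
Proof.
  intros Hb. pose proof (induced_boundary_cone Q Hb) as Tp.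
  assert (Qk : 0 < Q (S n)) by (apply cone_last_pos; [apply Hb|auto]).
  split; [apply Hb|split; auto]. intros t Ht. specialize (Tp t Ht).
  change (dot (S n) (central_proj n Q) t <= g t).
  rewrite (dot_extl (S n) (central_proj n Q) (fun i => / Q (S n) * Q i))
    by (intros; unfold central_proj, Rdiv; ring).
  rewrite dot_scal_l. apply (Rmult_le_reg_l (Q (S n))); auto.
  rewrite <- Rmult_assoc, Rinv_r by lra. lra.
Qed.

Lemma hemi_induced_last_pos P : on_sphere (S (S n)) P ->
  (forall X, T X -> hemi (S (S n)) P X) -> 0 < P (S n).
Proof.
  intros HP Hsub. apply Rnot_le_lt; intros Hc.
  destruct (Rle_lt_or_eq_dec _ _ Hc) as [Hl|He].
  - destruct (Hsub _ (induced_lift _ (Wulff_origin n g gpos))) as [_ H].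
    change (0 <= dot (S n) P (lift n (fun _ => 0)) + P (S n) * lift n (fun _ => 0) (S n)) in H.
    rewrite dot_comm, dot_lift_l, dot_zero_l, lift_last in H by auto.
    pose proof (lift_scale_pos n (fun _ => 0)). nra.
  - destruct (Wulff_contains_ball n g gpos gcont) as [d [Hd Hd2]].
    assert (HPk : dot (S n) P P = 1).
    { unfold on_sphere in HP. change (dot (S n) P P + P (S n) * P (S n) = 1) in HP.
      rewrite He in HP. lra. }
    set (y := vscal (- d) P).
    assert (Gy : Wulff n g y).
    { apply Hd2. unfold y. rewrite vnorm_vscal. unfold vnorm. rewrite HPk, sqrt_1.
      rewrite Rabs_left by lra. lra. }
    destruct (Hsub _ (induced_lift y Gy)) as [_ H].
    change (0 <= dot (S n) P (lift n y) + P (S n) * lift n y (S n)) in H.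
    rewrite He, dot_comm, dot_lift_l in H. unfold y in H.
    rewrite dot_vscal_l, HPk in H. pose proof (lift_scale_pos n (vscal (- d) P)). nra.
Qed.

Lemma hemi_induced_iff_polar P : 0 < P (S n) ->
  (forall X, T X -> hemi (S (S n)) P X) <-> polar (central_proj n P).
Proof.
  intros Hk. split.
  - intros Hsub y Hy. destruct (Hsub _ (induced_lift y Hy)) as [_ H].
    pose proof (lift_scale_pos n y).
    rewrite dot_central_proj, lift_last in H by (rewrite ?lift_last; lra).
    rewrite (dot_ext (S n) _ (central_proj n P) _ y) in H
      by (intros; split; [auto|apply central_proj_lift; auto]).
    assert (0 <= dot (S n) (central_proj n P) y + 1); [|lra].
    apply (Rmult_le_reg_l (P (S n) * lift_scale n y)); [apply Rmult_lt_0_compat; lra|].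
    rewrite Rmult_0_r. lra.
  - intros HD X [HXs [HXk GX]]. split; auto.
    change (Wulff n g (central_proj n X)) in GX.
    rewrite dot_central_proj by lra. specialize (HD _ GX).
    apply Rmult_le_pos; [apply Rmult_le_pos|]; lra.
Qed.

Lemma hemi_lift_polar p : polar p -> forall X, T X -> hemi (S (S n)) (lift n p) X.
Proof.
  intros Hp. apply hemi_induced_iff_polar; [rewrite lift_last; apply lift_scale_pos|].
  apply (polar_ext n g p); auto. intros; symmetry; apply central_proj_lift; auto.
Qed.

(* The lifts of [p] and [y0] are orthogonal, so the lift of [y0] is a contact point. *)
Lemma lift_supports p y0 : polar p -> Wulff n g y0 -> dot (S n) y0 p = -1 ->
  supports (S (S n)) T (lift n p).
Proof.
  intros HD Gy Hd.
  pose proof (hemi_lift_polar p HD) as Hsub.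
  assert (H0 : dot (S (S n)) (lift n p) (lift n y0) = 0).
  { rewrite dot_lift, dot_comm, Hd. ring. }
  split; [apply lift_sphere|split; auto].
  exists (lift n y0). apply sph_boundary_orth; auto using lift_sphere, induced_lift.
  intros Y TY. apply Hsub; auto.
Qed.

Lemma polar_rescale z : 0 < dot (S n) z z ->
  exists mu y0, 0 < mu /\ Wulff n g y0 /\ dot (S n) y0 z = - mu /\
    polar (vscal (/ mu) z) /\ dot (S n) y0 (vscal (/ mu) z) = -1.
Proof.
  intros Hz. destruct (Wulff_dot_min n g gpos gcont z) as [y0 [Gy0 Hmin]].
  destruct (Wulff_contains_ball n g gpos gcont) as [d [Hd Hd2]].
  assert (Hp : 0 < vnorm (S n) z) by (apply vnorm_gt0; auto).
  set (y1 := vscal (- d) (normalize (S n) z)).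
  assert (G1 : Wulff n g y1).
  { apply Hd2. unfold y1. rewrite vnorm_vscal, (vnorm_sphere _ _ (normalize_sphere _ _ Hp)).
    rewrite Rabs_left by lra. lra. }
  assert (E1 : dot (S n) y1 z = - d * vnorm (S n) z).
  { unfold y1. rewrite dot_vscal_l, dot_comm, dot_normalize; auto. }
  specialize (Hmin y1 G1) as Hm1.
  set (mu := - dot (S n) y0 z) in *.
  assert (Hmu : 0 < mu) by (unfold mu; nra).
  exists mu, y0. split; [auto|split; [auto|split; [unfold mu; ring|split]]].
  - intros y Hy. rewrite dot_vscal_l. specialize (Hmin y Hy). rewrite (dot_comm _ z y).
    assert (/ mu * (- mu) = -1) by (field; lra).
    assert (0 < / mu) by (apply Rinv_0_lt_compat; lra).
    assert (/ mu * (- mu) <= / mu * dot (S n) y z) by (apply Rmult_le_compat_l; [lra|unfold mu; lra]).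
    lra.
  - rewrite dot_comm, dot_vscal_l, dot_comm.
    replace (dot (S n) y0 z) with (- mu) by (unfold mu; ring). field. lra.
Qed.

End InducedBody.

(** * Self-duality and constant width [PI/2] *)

Section SelfDual.

Variables (n : nat) (g : vec -> R).
Hypothesis gpos : forall t, on_sphere (S n) t -> 0 < g t.
Hypothesis gcont : cont_on_sphere (S n) g.
Hypothesis self_dual : forall x, Wulff n g x <-> polar n g x.

Local Notation T := (induced n (Wulff n g)).

Lemma induced_dot_ge0 X Y : T X -> T Y -> 0 <= dot (S (S n)) X Y.
Proof.
  intros [_ [Xk GX]] [_ [Yk GY]].
  change (Wulff n g (central_proj n X)) in GX. change (Wulff n g (central_proj n Y)) in GY.
  rewrite dot_central_proj by lra. apply self_dual in GX. specialize (GX _ GY).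
  apply Rmult_le_pos; [apply Rmult_le_pos|]; lra.
Qed.

Lemma induced_self_polar P : on_sphere (S (S n)) P ->
  (forall X, T X -> hemi (S (S n)) P X) -> T P.
Proof.
  intros HP Hsub. pose proof (hemi_induced_last_pos n g gpos gcont P HP Hsub) as Pk.
  split; [auto|split; [auto|]]. apply self_dual, hemi_induced_iff_polar; auto.
Qed.

(* The contact point [Q0] of a supporting [H(P)] lies in [T], hence [H(Q0)] supports
   [T] and is orthogonal to [P]; every other admissible pole lies in [T] as well. *)
Lemma self_dual_constant_width : constant_width (S (S n)) T (PI / 2).
Proof.
  intros P [HP [Hsub [Q0 [bT bH]]]].
  pose proof (induced_closed n g gpos Q0 bT) as TQ0.
  assert (HQ0 : on_sphere (S (S n)) Q0) by apply TQ0.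
  assert (d0 : dot (S (S n)) P Q0 = 0) by (apply hemi_boundary_orth; auto; apply Hsub; auto).
  assert (d0' : dot (S (S n)) Q0 P = 0) by (rewrite dot_comm; auto).
  assert (TP : T P) by (apply induced_self_polar; auto).
  assert (HT : forall R, T R -> forall X, T X -> hemi (S (S n)) R X).
  { intros R TR X TX. split; [apply TX|apply induced_dot_ge0; auto]. }
  split.
  - exists Q0. destruct (orth_neq _ _ _ HP d0) as [N1 N2].
    split; [split; [|split; [|split; auto]]|].
    + split; [auto|split; [apply HT; auto|]]. exists P.
      apply sph_boundary_orth; auto. intros Y TY. apply HT; auto.
    + intros X HX. split; [apply Hsub|apply HT]; auto.
    + unfold arc_len. rewrite d0, acos_0. field.
  - intros Q [[HQs [HQsub _]] [Hsub2 _]].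
    destruct (Hsub2 Q (induced_self_polar Q HQs HQsub)) as [[_ HPQ] _].
    apply PI_minus_acos_ge_PI2; auto. apply dot_sphere_bound; auto.
Qed.

End SelfDual.

Section ConstantWidth.

Variables (n : nat) (g : vec -> R).
Hypothesis gpos : forall t, on_sphere (S n) t -> 0 < g t.
Hypothesis gcont : cont_on_sphere (S n) g.
Hypothesis width : constant_width (S (S n)) (induced n (Wulff n g)) (PI / 2).

Local Notation polar := (polar n g).

Lemma width_polar_dot_contact p q yp yq :
  polar p -> Wulff n g yp -> dot (S n) yp p = -1 ->
  polar q -> Wulff n g yq -> dot (S n) yq q = -1 -> -1 <= dot (S n) p q.
Proof.
  intros Dp Gp Ep Dq Gq Eq.
  pose proof (lift_supports n g p yp Dp Gp Ep) as SP.
  pose proof (lift_supports n g q yq Dq Gq Eq) as SQ.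
  destruct (classic (veq (S (S n)) (lift n q) (lift n p))) as [V|V].
  - rewrite (dot_extl (S n) p q q) by (intros; symmetry; apply (lift_veq n p q V); auto).
    pose proof (dot_self_ge0 (S n) q). lra.
  - destruct (width _ SP) as [_ Hmin].
    specialize (Hmin (lift n q)). apply PI_minus_acos_ge_PI2 in Hmin;
      [|apply dot_sphere_bound; apply lift_sphere
       |split; [auto|split; [intros X HX; split; [apply SP|apply SQ]; auto|
                            split; [auto|apply lift_neq_vopp]]]].
    rewrite dot_lift in Hmin.
    pose proof (lift_scale_pos n p). pose proof (lift_scale_pos n q).
    assert (0 <= dot (S n) p q + 1); [|lra].
    apply (Rmult_le_reg_l (lift_scale n p * lift_scale n q)); [apply Rmult_lt_0_compat; lra|].
    lra.
Qed.

Lemma width_polar_dot x d : polar x -> polar d -> -1 <= dot (S n) x d.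
Proof.
  intros Hx Hd.
  destruct (Req_dec (dot (S n) x x) 0) as [Ex|Ex].
  { rewrite dot_zero_l; [lra|]. apply dot_self_eq0; auto. }
  destruct (Req_dec (dot (S n) d d) 0) as [Ed|Ed].
  { rewrite dot_comm, dot_zero_l; [lra|]. apply dot_self_eq0; auto. }
  pose proof (dot_self_ge0 (S n) x). pose proof (dot_self_ge0 (S n) d).
  destruct (polar_rescale n g gpos gcont x ltac:(lra)) as [mx [yx [Hmx [Gyx [Eyx [Dpx Epx]]]]]].
  destruct (polar_rescale n g gpos gcont d ltac:(lra)) as [md [yd [Hmd [Gyd [Eyd [Dpd Epd]]]]]].
  assert (mx <= 1) by (specialize (Hx _ Gyx); rewrite dot_comm in Hx; lra).
  assert (md <= 1) by (specialize (Hd _ Gyd); rewrite dot_comm in Hd; lra).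
  pose proof (width_polar_dot_contact _ _ _ _ Dpx Gyx Epx Dpd Gyd Epd) as Hpq.
  assert (Exd : dot (S n) x d = mx * md * dot (S n) (vscal (/ mx) x) (vscal (/ md) d)).
  { rewrite dot_vscal_l, (dot_comm _ x (vscal _ d)), dot_vscal_l, (dot_comm _ d x).
    field. lra. }
  rewrite Exd. assert (0 < mx * md <= 1) by (split; [apply Rmult_lt_0_compat|]; nra).
  destruct (Rle_or_lt 0 (dot (S n) (vscal (/ mx) x) (vscal (/ md) d))); nra.
Qed.

Lemma width_polar_Wulff x : polar x -> Wulff n g x.
Proof.
  intros Hx t Ht. pose proof (gpos t Ht).
  assert (0 < / g t) by (apply Rinv_0_lt_compat; lra).
  assert (Ht' : polar (vscal (- / g t) t)).
  { intros y Hy. rewrite dot_vscal_l, dot_comm. specialize (Hy t Ht).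
    assert (/ g t * dot (S n) y t <= / g t * g t) by (apply Rmult_le_compat_l; lra).
    rewrite Rinv_l in * by lra. lra. }
  pose proof (width_polar_dot x _ Hx Ht') as H1.
  rewrite dot_comm, dot_vscal_l, dot_comm in H1.
  apply (Rmult_le_reg_l (/ g t)); auto. rewrite Rinv_l by lra. lra.
Qed.

(* The thickness [PI/2] of the lune realising the width forces an orthogonal pole. *)
Lemma width_polar_partner p y0 : polar p -> Wulff n g y0 -> dot (S n) y0 p = -1 ->
  exists q, polar q /\ dot (S n) p q = -1.
Proof.
  intros Dp Gy Ep.
  destruct (width _ (lift_supports n g p y0 Dp Gy Ep)) as [[Q [[[HQs [HQsub _]] _] HQ]] _].
  apply PI_minus_acos_eq_PI2 in HQ; [|apply dot_sphere_bound; auto; apply lift_sphere].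
  pose proof (hemi_induced_last_pos n g gpos gcont Q HQs HQsub) as Qk.
  exists (central_proj n Q). split; [apply hemi_induced_iff_polar; auto|].
  pose proof (lift_scale_pos n p).
  rewrite dot_central_proj, lift_last in HQ by (rewrite ?lift_last; lra).
  rewrite (dot_extl (S n) (central_proj n (lift n p)) p) in HQ
    by (intros; apply central_proj_lift; auto).
  apply Rmult_integral in HQ as [HQ|HQ]; [|lra].
  exfalso. apply Rmult_integral in HQ as [|]; lra.
Qed.

Lemma width_Wulff_polar x : Wulff n g x -> polar x.
Proof.
  intros Gx z Gz.
  destruct (Req_dec (dot (S n) z z) 0) as [Ez|Ez].
  { rewrite dot_comm, dot_zero_l; [lra|]. apply dot_self_eq0; auto. }
  pose proof (dot_self_ge0 (S n) z).
  destruct (polar_rescale n g gpos gcont z ltac:(lra)) as [mu [y0 [Hmu [Gy0 [_ [Dp Ep]]]]]].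
  destruct (width_polar_partner _ _ Dp Gy0 Ep) as [q [Dq Epq]].
  assert (Eqz : dot (S n) q z = - mu).
  { rewrite dot_vscal_l in Epq. rewrite dot_comm.
    apply (Rmult_eq_reg_l (/ mu)); [|apply Rinv_neq_0_compat; lra]. rewrite Epq. field. lra. }
  specialize (Dq z Gz). specialize (Dp x Gx).
  rewrite dot_vscal_l, dot_comm in Dp.
  assert (- mu <= dot (S n) x z); [|lra].
  apply (Rmult_le_reg_l (/ mu)); [apply Rinv_0_lt_compat; lra|].
  replace (/ mu * - mu) with (-1) by (field; lra). lra.
Qed.

End ConstantWidth.

Theorem theorem1 (n : nat) (hn : (1 <= n)%nat) (g : vec -> R)
  (gpos : forall t, on_sphere (S n) t -> 0 < g t)
  (gcont : cont_on_sphere (S n) g) :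
  (forall x, Wulff n g x <-> dual_Wulff n g x) <->
  constant_width (S (S n)) (induced n (Wulff n g)) (PI / 2).
Proof.
  assert (Hdual : forall x, dual_Wulff n g x <-> polar n g x).
  { split; [apply dual_Wulff_polar|apply polar_dual_Wulff]. }
  split.
  - intros Hsd. apply self_dual_constant_width; auto.
    intros x. rewrite Hsd; auto.
  - intros Hw x. rewrite Hdual.
    split; [apply width_Wulff_polar|apply width_polar_Wulff]; auto.
Qed.
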